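(* Let $\sigma(x,y)=(x\rightharpoonup y,x\leftharpoonup y)$ be an involutive non-degenerate quiver-theoretic Yang--Baxter map on a quiver $\mathscr{A}$ over $\Lambda$, and let $E$ be the closure of (the image of) $\mathscr{A}$ under right-lcms in the structure category $\mathscr{C}(\sigma)$. Let $x\bullet y:=(\cdot\leftharpoonup x)^{-1}(y)$ for $\mathfrak{t}(x)=\mathfrak{t}(y)$ and $x\,\tilde\star\,y:=y\bullet x$. For $\mu\in\Lambda$ and a finite set $J=\{y_1,\dots,y_n\}\subseteq\mathscr{A}(\Lambda,\mu)$ of pairwise distinct arrows, define $\tilde\Omega_1(y_1)=y_1$, $\tilde\Omega_j(y_1,\dots,y_j)=\tilde\Omega_{j-1}(y_1,y_3,\dots,y_j)\,\tilde\star\,\tilde\Omega_{j-1}(y_2,\dots,y_j)$ for $2\le j\le n$, and $\tilde\Delta_J=[\tilde\Omega_n(y_1,\dots,y_n)|\tilde\Omega_{n-1}(y_2,\dots,y_n)|\dots|\tilde\Omega_1(y_n)]\in\mathscr{C}(\sigma)$ (the left-lcm of $J$). Then $E=\{\tilde\Delta_J\mid\mu\in\Lambda,\ J\subseteq\mathscr{A}(\Lambda,\mu),\ 1\le|J|<\infty\}\cup\mathbf{1}_{\mathscr{A}}$, where $\mathbf{1}_{\mathscr{A}}$ is the set of identities of $\mathscr{C}(\sigma)$.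
   Context: A quiver-theoretic Yang--Baxter map is a source/target-preserving map $\sigma$ on composable pairs satisfying the braid relation; involutive: $\sigma^2=\mathrm{id}$; non-degenerate: all $x\rightharpoonup\cdot\colon\mathscr{A}(\mathfrak{t}(x),\Lambda)\to\mathscr{A}(\mathfrak{s}(x),\Lambda)$ and $\cdot\leftharpoonup y\colon\mathscr{A}(\Lambda,\mathfrak{s}(y))\to\mathscr{A}(\Lambda,\mathfrak{t}(y))$ bijective. $\mathscr{C}(\sigma)$ is the category presented by generators $\mathscr{A}$ and relations $x|y\sim(x\rightharpoonup y)|(x\leftharpoonup y)$; $[w]$ denotes the class of a path $w$. Right-lcm (resp. left-lcm): a common right- (resp. left-) multiple that left- (resp. right-) divides every common right- (resp. left-) multiple. *)

From Stdlib Require Import List Relations ClassicalEpsilon.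
Import ListNotations.
Set Implicit Arguments.

(* A quiver over Lambda: arrows of type A with source s and target t.
   A composable pair (x, y) means t x = s y (paths x|y are read left to right).
   A quiver-theoretic map on composable pairs is given by its two components
   lf x y = x ⇀ y and rf x y = x ↼ y. *)
Section QYB.
Variables (Lam A : Type) (s t : A -> Lam) (lf rf : A -> A -> A).

Definition sigma12 (w : A * A * A) : A * A * A :=
  let '(x, y, z) := w in (lf x y, rf x y, z).
Definition sigma23 (w : A * A * A) : A * A * A :=
  let '(x, y, z) := w in (x, lf y z, rf y z).

Definition st_preserving : Prop :=
  forall x y, t x = s y ->
    s (lf x y) = s x /\ t (lf x y) = s (rf x y) /\ t (rf x y) = t y.

Definition braid : Prop :=
  forall x y z, t x = s y -> t y = s z ->
    sigma12 (sigma23 (sigma12 (x, y, z))) = sigma23 (sigma12 (sigma23 (x, y, z))).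

Definition involutive : Prop :=
  forall x y, t x = s y -> lf (lf x y) (rf x y) = x /\ rf (lf x y) (rf x y) = y.

Definition nondegenerate : Prop :=
  (forall x,
     (forall y y', s y = t x -> s y' = t x -> lf x y = lf x y' -> y = y') /\
     (forall z, s z = s x -> exists y, s y = t x /\ lf x y = z)) /\
  (forall y,
     (forall z z', t z = s y -> t z' = s y -> rf z y = rf z' y -> z = z') /\
     (forall w, t w = t y -> exists z, t z = s y /\ rf z y = w)).

Definition qYB_map : Prop := st_preserving /\ braid.

(* x • y := (· ↼ x)^{-1}(y), for t x = t y (junk value otherwise) *)
Definition bullet (x y : A) : A :=
  epsilon (inhabits y) (fun z => t z = s x /\ rf z x = y).

Definition tstar (x y : A) : A := bullet y x.

(* OmegaT y ys = ~Ω_{n}(y, ys_1, ..., ys_{n-1}):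
   ~Ω_1(y1) = y1,
   ~Ω_j(y1,y2,...,yj) = ~Ω_{j-1}(y1,y3,...,yj) ~⋆ ~Ω_{j-1}(y2,...,yj). *)
Fixpoint OmegaT (y1 : A) (ys : list A) : A :=
  match ys with
  | [] => y1
  | y2 :: r => tstar (OmegaT y1 r) (OmegaT y2 r)
  end.

Fixpoint DeltaList (y1 : A) (ys : list A) : list A :=
  OmegaT y1 ys :: match ys with [] => [] | y2 :: r => DeltaList y2 r end.

Record path := Path { psrc : Lam; parr : list A }.

Fixpoint chain (l : Lam) (xs : list A) : Prop :=
  match xs with [] => True | x :: r => s x = l /\ chain (t x) r end.
Fixpoint tgt_from (l : Lam) (xs : list A) : Lam :=
  match xs with [] => l | x :: r => tgt_from (t x) r end.

Definition valid (p : path) : Prop := chain (psrc p) (parr p).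
Definition ptgt (p : path) : Lam := tgt_from (psrc p) (parr p).
Definition comp (p q : path) : path := Path (psrc p) (parr p ++ parr q).
Definition ident (l : Lam) : path := Path l [].
Definition arrow (x : A) : path := Path (s x) [x].

Inductive step : list A -> list A -> Prop :=
  | step_rel : forall p q x y, t x = s y ->
      step (p ++ x :: y :: q) (p ++ lf x y :: rf x y :: q).

(* equality of morphisms of C(sigma): [p] = [q] *)
Definition peq (p q : path) : Prop :=
  psrc p = psrc q /\ clos_refl_sym_trans (list A) step (parr p) (parr q).

Definition ldiv (f m : path) : Prop :=
  exists k, valid k /\ psrc k = ptgt f /\ peq m (comp f k).

Definition common_rmul (f g m : path) : Prop := valid m /\ ldiv f m /\ ldiv g m.

Definition is_rlcm (f g m : path) : Prop :=
  common_rmul f g m /\ forall n, common_rmul f g n -> ldiv m n.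

(* E: closure of (the image of) A under right-lcms; identities are included
   (right-lcm of the empty family at a vertex) *)
Inductive inE : path -> Prop :=
  | inE_id : forall l, inE (ident l)
  | inE_arr : forall x, inE (arrow x)
  | inE_lcm : forall f g m, inE f -> inE g -> is_rlcm f g m -> inE m.

End QYB.

(* A path x1|...|xn out of l has the coordinates x1, x1 ⇀ x2, x1 ⇀ (x2 ⇀ x3),
   ..., all arrows out of l.  The braid relation and involutivity make this
   list invariant up to order under the defining relations, and left
   non-degeneracy makes it a complete invariant taking every value: morphisms
   of C(σ) out of l are finite multisets of arrows out of l, and left
   divisibility is multiset inclusion.  Hence a right-lcm of two elements
   with pairwise distinct coordinates divides their union and again has
   distinct coordinates, while an element with distinct coordinates x, M is
   the right-lcm of x and the element with coordinates M: E consists of the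
   morphisms with pairwise distinct coordinates.
   Reversing the arrows and swapping ⇀ with ↼ gives another involutive
   non-degenerate map, whose coordinates are read from the target.  These
   have a repetition iff the left ones do, since both happen iff some
   representative contains a factor x|y with x ⇀ y = x, equivalently
   x ↼ y = y.  Finally the right coordinates of Δ̃_J are the elements of J. *)

From Stdlib Require Import List ListDec Relations ClassicalEpsilon Permutation.
Import Corelib.Program.Basics(flip).
Import ListNotations.
Set Implicit Arguments.
Unset Strict Implicit.

Fixpoint act {A : Type} (lf : A -> A -> A) (w : list A) (z : A) : A :=
  match w with [] => z | x :: w' => lf x (act lf w' z) end.

Fixpoint coord {A : Type} (lf : A -> A -> A) (w : list A) : list A :=
  match w with [] => [] | x :: w' => x :: map (lf x) (coord lf w') end.

Definition submultiset {A : Type} (L M : list A) : Prop :=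
  exists R, Permutation M (L ++ R).

Section Lists.
Variable A : Type.

Lemma act_app (lf : A -> A -> A) u v z : act lf (u ++ v) z = act lf u (act lf v z).
Proof. induction u as [|x u IH]; cbn; congruence. Qed.

Lemma coord_app (lf : A -> A -> A) u v :
  coord lf (u ++ v) = coord lf u ++ map (act lf u) (coord lf v).
Proof.
  induction u as [|x u IH]; cbn.
  - now rewrite map_id.
  - now rewrite IH, map_app, map_map.
Qed.

Lemma not_NoDup_coord_fixed_pair (lf : A -> A -> A) p z u q :
  lf z u = z -> ~ NoDup (coord lf (p ++ z :: u :: q)).
Proof.
  intros Hfix N. rewrite coord_app in N.
  apply NoDup_app_remove_l, NoDup_map_inv in N. cbn in N. rewrite Hfix in N.
  apply NoDup_cons_iff in N as [N _]. apply N. now left.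
Qed.

Lemma Permutation_map_inj_on B (f : A -> B) (P : A -> Prop) L1 L2 :
  (forall x y, P x -> P y -> f x = f y -> x = y) ->
  (forall x, In x L1 -> P x) -> (forall x, In x L2 -> P x) ->
  Permutation (map f L1) (map f L2) -> Permutation L1 L2.
Proof.
  intros Hf H1 H2 HP. destruct (Permutation_map_inv _ _ HP) as (L3 & E & P23).
  assert (H3 : forall x, In x L3 -> P x)
    by (intros x Hx; apply H2; exact (Permutation_in _ (Permutation_sym P23) Hx)).
  enough (L1 = L3) by (subst; now symmetry).
  clear H2 HP P23. revert L3 E H3.
  induction L1 as [|x L1 IH]; intros [|y L3] E H3; try discriminate; [reflexivity|].
  injection E as Exy E. f_equal.
  - apply Hf; auto; [apply H1 | apply H3]; now left.
  - apply IH; auto; intros; [apply H1 | apply H3]; now right.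
Qed.

Lemma submultiset_cons a (L M : list A) :
  ~ In a L -> In a M -> submultiset L M -> submultiset (a :: L) M.
Proof.
  intros Ha HaM [R P].
  assert (HaR : In a R).
  { apply (Permutation_in _ P), in_app_or in HaM. tauto. }
  apply in_split in HaR as (r1 & r2 & ->). exists (r1 ++ r2).
  rewrite P, !app_assoc. symmetry. apply Permutation_middle.
Qed.

Lemma NoDup_submultiset (L M : list A) : submultiset L M -> NoDup M -> NoDup L.
Proof.
  intros [R P] N. apply (NoDup_app_remove_r _ R). exact (Permutation_NoDup P N).
Qed.

Lemma NoDup_union (L1 L2 : list A) : NoDup L1 -> NoDup L2 ->
  exists U, NoDup U /\ submultiset L1 U /\ submultiset L2 U /\ incl U (L1 ++ L2).
Proof.
  intros N1. induction L2 as [|a L2 IH]; intros N2.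
  - exists L1. repeat split; auto.
    + exists []. now rewrite app_nil_r.
    + now exists L1.
    + rewrite app_nil_r. apply incl_refl.
  - apply NoDup_cons_iff in N2 as [Ha N2].
    destruct (IH N2) as (U & NU & S1 & S2 & HU).
    destruct (classic (In a U)) as [HaU | HaU].
    + exists U. repeat split; auto using submultiset_cons.
      intros z Hz. apply HU, in_app_or in Hz. apply in_or_app. cbn. tauto.
    + exists (a :: U). repeat split.
      * now constructor.
      * destruct S1 as [R1 P1]. exists (a :: R1).
        rewrite P1. apply Permutation_middle.
      * destruct S2 as [R2 P2]. exists R2. now apply perm_skip.
      * intros z [<- | Hz]; [apply in_or_app; cbn; tauto|].
        apply HU, in_app_or in Hz. apply in_or_app. cbn. tauto.
Qed.

End Lists.

Section Words.
Variables (Lam A : Type) (s t : A -> Lam).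

Lemma chain_app u v l :
  chain s t l (u ++ v) <-> chain s t l u /\ chain s t (tgt_from t l u) v.
Proof. revert l; induction u as [|x u IH]; intros l; cbn; [tauto|]. rewrite IH. tauto. Qed.

Lemma tgt_from_app u v l : tgt_from t l (u ++ v) = tgt_from t (tgt_from t l u) v.
Proof. revert l; induction u as [|x u IH]; intros l; cbn; auto. Qed.

End Words.

Lemma chain_rev (Lam A : Type) (s t : A -> Lam) w l : chain s t l w ->
  chain t s (tgt_from t l w) (rev w) /\ tgt_from s (tgt_from t l w) (rev w) = l.
Proof.
  revert l; induction w as [|x w IH]; intros l; cbn; [auto|].
  intros [<- Cw]. destruct (IH _ Cw) as [Cr Tr].
  rewrite chain_app, tgt_from_app. cbn. rewrite Tr. tauto.
Qed.

Section Equiv.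
Variables (Lam A : Type) (s t : A -> Lam) (lf rf : A -> A -> A).
Local Notation equiv := (clos_refl_sym_trans (list A) (step s t lf rf)).

Lemma equiv_cons a w w' : equiv w w' -> equiv (a :: w) (a :: w').
Proof.
  induction 1 as [w w' [p q x y Hxy]| | |]; eauto using clos_refl_sym_trans.
  apply rst_step. exact (step_rel s t lf rf (a :: p) q x y Hxy).
Qed.

Lemma equiv_rev w w' : equiv w w' ->
  clos_refl_sym_trans (list A) (step t s (flip rf) (flip lf)) (rev w) (rev w').
Proof.
  induction 1 as [w w' [p q x y Hxy]| | |]; eauto using clos_refl_sym_trans.
  apply rst_step. rewrite !rev_app_distr. cbn. rewrite <- !app_assoc.
  exact (step_rel t s (flip rf) (flip lf) (rev q) (rev p) y x (eq_sym Hxy)).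
Qed.

End Equiv.

(* What the argument needs of [⇀]; an involutive non-degenerate map and its
   mirror [(flip rf, flip lf)] on the reversed quiver both provide it. *)
Record lcycle_quiver (Lam A : Type) (s t : A -> Lam) (lf rf : A -> A -> A) : Prop := {
  src_lf : forall x y, t x = s y -> s (lf x y) = s x;
  tgt_lf : forall x y, t x = s y -> t (lf x y) = s (rf x y);
  tgt_rf : forall x y, t x = s y -> t (rf x y) = t y;
  lf_braid : forall x y z, t x = s y -> t y = s z ->
    lf x (lf y z) = lf (lf x y) (lf (rf x y) z);
  lf_lf_rf : forall x y, t x = s y -> lf (lf x y) (rf x y) = x;
  lf_inj : forall x y y', s y = t x -> s y' = t x -> lf x y = lf x y' -> y = y';
  lf_surj : forall x z, s z = s x -> exists y, s y = t x /\ lf x y = z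
}.

Section QYB.
Variables (Lam A : Type) (s t : A -> Lam) (lf rf : A -> A -> A).

Lemma lcycle_quiver_of_qYB :
  qYB_map s t lf rf -> involutive s t lf rf -> nondegenerate s t lf rf ->
  lcycle_quiver s t lf rf.
Proof.
  intros [Hst Hbr] Hinv [Hnd _]. split.
  - apply Hst.
  - apply Hst.
  - apply Hst.
  - intros x y z Hxy Hyz. specialize (Hbr x y z Hxy Hyz).
    unfold sigma12, sigma23 in Hbr. cbn in Hbr. now injection Hbr.
  - apply Hinv.
  - intros x. apply Hnd.
  - intros x z Hz. destruct (proj2 (Hnd x) z Hz) as (y & Hy & E). eauto.
Qed.

Lemma qYB_map_mirror : qYB_map s t lf rf -> qYB_map t s (flip rf) (flip lf).
Proof.
  intros [Hst Hbr]. split.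
  - intros x y Hxy. unfold flip. destruct (Hst y x (eq_sym Hxy)) as (Hs & Hm & Ht).
    auto.
  - intros x y z Hxy Hyz. specialize (Hbr z y x (eq_sym Hyz) (eq_sym Hxy)).
    unfold sigma12, sigma23, flip in *. cbn in *. injection Hbr. congruence.
Qed.

Lemma involutive_mirror : involutive s t lf rf -> involutive t s (flip rf) (flip lf).
Proof. intros Hinv x y Hxy. unfold flip. destruct (Hinv y x (eq_sym Hxy)). auto. Qed.

Lemma nondegenerate_mirror : nondegenerate s t lf rf -> nondegenerate t s (flip rf) (flip lf).
Proof. intros [Hl Hr]. now split. Qed.

End QYB.

Lemma inE_valid (Lam A : Type) (s t : A -> Lam) (lf rf : A -> A -> A) p :
  inE s t lf rf p -> valid s t p.
Proof. induction 1 as [l | x | f g m _ _ _ _ [[Vm _] _]]; cbn; auto. Qed.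

Section Cycle.
Variables (Lam A : Type) (s t : A -> Lam) (lf rf : A -> A -> A).
Hypothesis C : lcycle_quiver s t lf rf.
Local Notation equiv := (clos_refl_sym_trans (list A) (step s t lf rf)).

Lemma rf_of_lf_fixed z u : t z = s u -> lf z u = z -> rf z u = u.
Proof.
  intros Hzu Hfix. pose proof (lf_lf_rf C Hzu) as I. rewrite Hfix in I.
  apply (lf_inj C (x := z)); [| now symmetry | congruence].
  now rewrite <- (tgt_lf C Hzu), Hfix.
Qed.

Lemma chain_equiv w w' : equiv w w' -> forall l,
  (chain s t l w <-> chain s t l w') /\ tgt_from t l w = tgt_from t l w'.
Proof.
  induction 1 as [w w' [p q x y Hxy] | w | w w' _ IH | w w' w'' _ IH1 _ IH2]; intros l.
  - rewrite !chain_app, !tgt_from_app. cbn.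
    rewrite (src_lf C Hxy), (tgt_lf C Hxy), (tgt_rf C Hxy).
    split; [intuition congruence | reflexivity].
  - tauto.
  - destruct (IH l). split; [tauto | auto].
  - destruct (IH1 l), (IH2 l). split; [tauto | congruence].
Qed.

Lemma coord_src w l : chain s t l w -> forall z, In z (coord lf w) -> s z = l.
Proof.
  revert l; induction w as [|x w IH]; cbn; intros l Cw z Hz; [tauto|].
  destruct Cw as [<- Cw]. destruct Hz as [<- | Hz]; [reflexivity|].
  apply in_map_iff in Hz as (z' & <- & Hz').
  apply (src_lf C). symmetry. exact (IH _ Cw z' Hz').
Qed.

Lemma length_coord w : length (coord lf w) = length w.
Proof. induction w as [|x w IH]; cbn; now rewrite ?length_map, ?IH. Qed.

(* The braid relation for [⇀] and involutivity: the coordinates of [x|y] and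
   [(x ⇀ y)|(x ↼ y)] differ by a transposition. *)
Lemma coord_step_perm w w' : step s t lf rf w w' -> forall l, chain s t l w ->
  Permutation (coord lf w) (coord lf w').
Proof.
  intros [p q x y Hxy] l Cw. rewrite !coord_app. apply Permutation_app_head, Permutation_map.
  apply chain_app in Cw as (_ & _ & _ & Cq). cbn. rewrite (lf_lf_rf C Hxy), !map_map.
  erewrite map_ext_in; [apply perm_swap|].
  intros z Hz. apply (lf_braid C Hxy). symmetry. exact (coord_src Cq Hz).
Qed.

Lemma coord_equiv_perm w w' : equiv w w' -> forall l, chain s t l w ->
  Permutation (coord lf w) (coord lf w').
Proof.
  induction 1 as [w w' Hs | w | w w' R IH | w w' w'' R1 IH1 _ IH2]; intros l Cw.
  - exact (coord_step_perm Hs Cw).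
  - reflexivity.
  - symmetry. apply (IH l). now apply (chain_equiv R l).
  - rewrite (IH1 l Cw). apply (IH2 l). now apply (chain_equiv R1 l).
Qed.

Lemma act_surj w l : chain s t l w -> forall z, s z = l ->
  exists y, s y = tgt_from t l w /\ act lf w y = z.
Proof.
  revert l; induction w as [|x w IH]; cbn; intros l Cw z Hz; [eauto|].
  destruct Cw as [<- Cw]. destruct (lf_surj C Hz) as (z' & Hz' & <-).
  destruct (IH _ Cw z' Hz') as (y & Hy & <-). eauto.
Qed.

Lemma coord_extend u l L : chain s t l u -> (forall z, In z L -> s z = l) ->
  exists v, chain s t (tgt_from t l u) v /\ coord lf (u ++ v) = coord lf u ++ L.
Proof.
  intros Cu. induction L as [|z L IH] using rev_ind; intros HL.
  - exists []. cbn. now rewrite !app_nil_r.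
  - destruct IH as (v & Cv & Ev); [intros; apply HL, in_or_app; auto|].
    assert (Cuv : chain s t l (u ++ v)) by (apply chain_app; auto).
    destruct (act_surj Cuv (z := z)) as (y & Hy & Ey); [apply HL, in_or_app; cbn; auto|].
    exists (v ++ [y]). split.
    + apply chain_app. rewrite <- tgt_from_app. cbn. auto.
    + rewrite app_assoc, coord_app, Ev. cbn. now rewrite Ey, app_assoc.
Qed.

Lemma coord_surj L l : (forall z, In z L -> s z = l) ->
  exists w, chain s t l w /\ coord lf w = L.
Proof. intros HL. exact (coord_extend (u := []) I HL). Qed.

Lemma equiv_cons_of_In_coord w l : chain s t l w -> forall z, In z (coord lf w) ->
  exists w', equiv w (z :: w').
Proof.
  revert l; induction w as [|x w IH]; cbn; intros l Cw z Hz; [tauto|].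
  destruct Cw as [_ Cw]. destruct Hz as [<- | Hz]; [exists w; apply rst_refl|].
  apply in_map_iff in Hz as (z' & <- & Hz').
  destruct (IH _ Cw z' Hz') as (w' & R). exists (rf x z' :: w').
  apply rst_trans with (x :: z' :: w'); [now apply equiv_cons|].
  apply rst_step. apply (step_rel s t lf rf [] w' x z'). symmetry. exact (coord_src Cw Hz').
Qed.

(* Bring the first letter [a] of [u] to the front of [v], then cancel the
   injective [a ⇀ ·] on the remaining coordinates. *)
Lemma equiv_of_coord_perm u v l : chain s t l u -> chain s t l v ->
  Permutation (coord lf u) (coord lf v) -> equiv u v.
Proof.
  revert v l; induction u as [|a u IH]; intros v l Cu Cv P.
  - apply Permutation_nil in P. apply (f_equal (@length A)) in P.
    rewrite length_coord in P. destruct v; [apply rst_refl | discriminate].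
  - assert (Ha : In a (coord lf v)) by (apply (Permutation_in _ P); now left).
    destruct (equiv_cons_of_In_coord Cv Ha) as (v' & R).
    assert (Cv' : chain s t l (a :: v')) by now apply (chain_equiv R l).
    pose proof (perm_trans P (coord_equiv_perm R Cv)) as P'.
    cbn in P'. apply Permutation_cons_inv in P'.
    destruct Cu as [_ Cu], Cv' as [_ Cv'].
    apply rst_trans with (a :: v'); [apply equiv_cons | now apply rst_sym].
    apply (IH v' (t a) Cu Cv').
    apply (Permutation_map_inj_on (f := lf a) (P := fun y => s y = t a)); auto.
    + intros y y' Hy Hy'. exact (lf_inj C Hy Hy').
    + exact (coord_src Cu).
    + exact (coord_src Cv').
Qed.

Lemma fixed_pair_of_not_NoDup_coord w l : chain s t l w -> ~ NoDup (coord lf w) ->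
  exists z u w', equiv w (z :: u :: w') /\ lf z u = z.
Proof.
  intros Cw N.
  destruct (not_NoDup (fun x y => classic (x = y)) N) as (z & l1 & l2 & l3 & E).
  assert (Hz : In z (coord lf w)) by (rewrite E; apply in_elt).
  destruct (equiv_cons_of_In_coord Cw Hz) as (w1 & R1).
  pose proof (coord_equiv_perm R1 Cw) as P. rewrite E in P. cbn in P.
  apply Permutation_sym, Permutation_cons_app_inv, Permutation_sym in P.
  assert (Hu : In z (map (lf z) (coord lf w1))).
  { apply (Permutation_in _ P), in_or_app. right. apply in_elt. }
  apply in_map_iff in Hu as (u & Hfix & Hu).
  assert (C1 : chain s t l (z :: w1)) by now apply (chain_equiv R1 l).
  destruct C1 as [_ C1]. destruct (equiv_cons_of_In_coord C1 Hu) as (w2 & R2).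
  exists z, u, w2. split; [|exact Hfix].
  apply rst_trans with (z :: w1); [exact R1 | now apply equiv_cons].
Qed.

Lemma ldiv_iff_submultiset f m : valid s t f -> valid s t m ->
  (ldiv s t lf rf f m <->
   psrc m = psrc f /\ submultiset (coord lf (parr f)) (coord lf (parr m))).
Proof.
  intros Vf Vm. split.
  - intros (k & _ & _ & Sm & Rm). split; [exact Sm|].
    exists (map (act lf (parr f)) (coord lf (parr k))).
    rewrite <- coord_app. exact (coord_equiv_perm Rm Vm).
  - intros [Sm [R P]].
    assert (HR : forall z, In z R -> s z = psrc f).
    { intros z Hz. rewrite <- Sm. apply (coord_src Vm).
      apply (Permutation_in _ (Permutation_sym P)), in_or_app. auto. }
    destruct (coord_extend Vf HR) as (v & Cv & Ev).
    exists (Path (ptgt t f) v). repeat split; [exact Cv | exact Sm |]. cbn.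
    apply (equiv_of_coord_perm (l := psrc m)); [exact Vm | | now rewrite Ev].
    apply chain_app. rewrite Sm. auto.
Qed.

Lemma NoDup_coord_of_inE p : inE s t lf rf p -> NoDup (coord lf (parr p)).
Proof.
  induction 1 as [l | x | f g m Ef IHf Eg IHg [[Vm [Dfm Dgm]] Hmin]].
  - constructor.
  - repeat constructor. auto.
  - pose proof (inE_valid Ef) as Vf. pose proof (inE_valid Eg) as Vg.
    apply (ldiv_iff_submultiset Vf Vm) in Dfm as [Sf _].
    apply (ldiv_iff_submultiset Vg Vm) in Dgm as [Sg _].
    destruct (NoDup_union IHf IHg) as (U & NU & SfU & SgU & HU).
    assert (HUsrc : forall z, In z U -> s z = psrc m).
    { intros z Hz. apply HU, in_app_or in Hz as [Hz | Hz];
        [rewrite Sf | rewrite Sg]; eapply coord_src; eauto. }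
    destruct (coord_surj HUsrc) as (w & Cw & Ew).
    change (valid s t (Path (psrc m) w)) in Cw.
    assert (Dmn : ldiv s t lf rf m (Path (psrc m) w)).
    { apply Hmin. split; [exact Cw | split];
        apply ldiv_iff_submultiset; cbn; auto; rewrite Ew; auto. }
    apply (ldiv_iff_submultiset Vm Cw) in Dmn as [_ Smn]. cbn in Smn.
    rewrite Ew in Smn. exact (NoDup_submultiset Smn NU).
Qed.

Lemma inE_of_NoDup_coord p : valid s t p -> NoDup (coord lf (parr p)) -> inE s t lf rf p.
Proof.
  remember (coord lf (parr p)) as L eqn:E. revert p E.
  induction L as [|x L IH]; intros p E Vp N.
  - apply (f_equal (@length A)) in E. rewrite length_coord in E.
    destruct p as [l [|y w]]; [apply inE_id | discriminate].
  - apply NoDup_cons_iff in N as [Hx N].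
    assert (Hsrc : forall z, In z (x :: L) -> s z = psrc p)
      by (rewrite E; exact (coord_src Vp)).
    destruct (coord_surj (fun z Hz => Hsrc z (or_intror Hz))) as (w & Cw & Ew).
    change (valid s t (Path (psrc p) w)) in Cw.
    assert (Hw : inE s t lf rf (Path (psrc p) w)) by (apply IH; auto).
    assert (Vx : valid s t (arrow s x)) by (cbn; auto).
    apply (inE_lcm (inE_arr s t lf rf x) Hw). split; [split; [exact Vp | split] |].
    + apply ldiv_iff_submultiset; auto. split; [symmetry; now apply Hsrc; left|].
      exists L. cbn. now rewrite <- E.
    + apply ldiv_iff_submultiset; auto. split; [reflexivity|].
      exists [x]. cbn. rewrite Ew, <- E. apply Permutation_cons_append.
    + intros n (Vn & Dxn & Dwn).
      apply (ldiv_iff_submultiset Vx Vn) in Dxn as [Sn Sxn].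
      apply (ldiv_iff_submultiset Cw Vn) in Dwn as [_ Swn].
      apply ldiv_iff_submultiset; auto. cbn in *. rewrite Ew in Swn.
      split; [now rewrite Sn; apply Hsrc; left|]. rewrite <- E.
      apply submultiset_cons; auto.
      destruct Sxn as [R P]. apply (Permutation_in _ (Permutation_sym P)). now left.
Qed.

Lemma inE_iff_NoDup_coord p : valid s t p ->
  (inE s t lf rf p <-> NoDup (coord lf (parr p))).
Proof. split; [apply NoDup_coord_of_inE | now apply inE_of_NoDup_coord]. Qed.

End Cycle.

Section MirrorCoord.
Variables (Lam A : Type) (s t : A -> Lam) (lf rf : A -> A -> A).
Hypothesis C : lcycle_quiver s t lf rf.
Hypothesis Cm : lcycle_quiver t s (flip rf) (flip lf).

(* A repeated left coordinate yields a factor [z|u] with [z ⇀ u = z], i.e.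
   [z ↼ u = u], which is a repeated right coordinate read from the target. *)
Lemma NoDup_coord_of_mirror w l : chain s t l w ->
  NoDup (coord (flip rf) (rev w)) -> NoDup (coord lf w).
Proof.
  intros Cw N. apply NNPP. intros D.
  destruct (fixed_pair_of_not_NoDup_coord C Cw D) as (z & u & w' & R & Hfix).
  assert (Hzu : t z = s u)
    by (apply (chain_equiv C R l) in Cw as (_ & Hu & _); now symmetry).
  apply (not_NoDup_coord_fixed_pair (lf := flip rf) (p := rev w') (z := u) (u := z)
           (q := [])).
  - exact (rf_of_lf_fixed C Hzu Hfix).
  - pose proof (coord_equiv_perm Cm (equiv_rev R) (proj1 (chain_rev Cw))) as P.
    apply (Permutation_NoDup P) in N. cbn in N. now rewrite <- app_assoc in N.
Qed.

Lemma mirror_coord_perm_of_peq p q : valid s t p -> peq s t lf rf p q ->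
  Permutation (coord (flip rf) (rev (parr p))) (coord (flip rf) (rev (parr q))).
Proof.
  intros Vp [_ R]. exact (coord_equiv_perm Cm (equiv_rev R) (proj1 (chain_rev Vp))).
Qed.

Lemma peq_of_mirror_coord_perm p q : valid s t p -> valid s t q -> ptgt t p = ptgt t q ->
  Permutation (coord (flip rf) (rev (parr p))) (coord (flip rf) (rev (parr q))) ->
  peq s t lf rf p q.
Proof.
  intros Vp Vq Tpq P.
  destruct (chain_rev Vp) as [Cp Sp], (chain_rev Vq) as [Cq Sq].
  fold (ptgt t p) in Cp, Sp. fold (ptgt t q) in Cq, Sq. rewrite Tpq in Cp, Sp.
  pose proof (equiv_of_coord_perm Cm Cp Cq P) as R.
  split.
  - pose proof (proj2 (chain_equiv Cm R (ptgt t q))). congruence.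
  - pose proof (equiv_rev R) as R'. now rewrite !rev_involutive in R'.
Qed.

End MirrorCoord.

Lemma NoDup_coord_iff_mirror (Lam A : Type) (s t : A -> Lam) (lf rf : A -> A -> A) w l :
  lcycle_quiver s t lf rf -> lcycle_quiver t s (flip rf) (flip lf) -> chain s t l w ->
  (NoDup (coord lf w) <-> NoDup (coord (flip rf) (rev w))).
Proof.
  intros C Cm Cw. split; [|exact (NoDup_coord_of_mirror C Cm Cw)].
  intros N. apply (NoDup_coord_of_mirror Cm C (proj1 (chain_rev Cw))).
  now rewrite rev_involutive.
Qed.

Lemma bullet_spec (Lam A : Type) (s t : A -> Lam) (lf rf : A -> A -> A) x y :
  nondegenerate s t lf rf -> t x = t y ->
  t (bullet s t rf x y) = s x /\ rf (bullet s t rf x y) x = y.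
Proof. intros [_ Hnd] Hxy. unfold bullet. apply epsilon_spec, (proj2 (Hnd x)). auto. Qed.

Section Delta.
Variables (Lam A : Type) (s t : A -> Lam) (lf rf : A -> A -> A) (mu : Lam).
Hypothesis Hnd : nondegenerate s t lf rf.
Local Notation Omega := (OmegaT s t rf).
Local Notation Delta := (DeltaList s t rf).

Lemma OmegaT_tgt_eq ys : (forall z, In z ys -> t z = mu) ->
  forall y a, t y = mu -> t a = mu -> t (Omega y ys) = t (Omega a ys).
Proof.
  induction ys as [|b ys IH]; intros Hys y a Hy Ha; cbn; [congruence|].
  assert (Hb : t b = mu) by (apply Hys; now left).
  assert (Hys' : forall z, In z ys -> t z = mu) by (intros; apply Hys; now right).
  unfold tstar. rewrite (proj1 (bullet_spec Hnd (IH Hys' b y Hb Hy))).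
  now rewrite (proj1 (bullet_spec Hnd (IH Hys' b a Hb Ha))).
Qed.

Lemma DeltaList_chain ys y : (forall z, In z (y :: ys) -> t z = mu) ->
  chain s t (s (Omega y ys)) (Delta y ys) /\ tgt_from t (s (Omega y ys)) (Delta y ys) = mu.
Proof.
  revert y; induction ys as [|a ys IH]; intros y HJ; cbn.
  - split; auto. apply HJ. now left.
  - assert (Ha : forall z, In z (a :: ys) -> t z = mu) by (intros; apply HJ; now right).
    assert (Hys : forall z, In z ys -> t z = mu) by (intros; apply Ha; now right).
    assert (E : t (Omega a ys) = t (Omega y ys))
      by (apply OmegaT_tgt_eq; auto; [apply Ha | apply HJ]; now left).
    unfold tstar. rewrite (proj1 (bullet_spec Hnd E)).
    destruct (IH a Ha) as [Ca Ta]. auto.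
Qed.

Lemma act_rev_tl_DeltaList ys y : (forall z, In z (y :: ys) -> t z = mu) ->
  act (flip rf) (rev (tl (Delta y ys))) (Omega y ys) = y.
Proof.
  revert y; induction ys as [|a ys IH]; intros y HJ; [reflexivity|].
  assert (Ha : forall z, In z (a :: ys) -> t z = mu) by (intros; apply HJ; now right).
  assert (Hy : forall z, In z (y :: ys) -> t z = mu)
    by (intros z [<- | Hz]; apply HJ; [now left | now right; right]).
  assert (Hys : forall z, In z ys -> t z = mu) by (intros; apply Ha; now right).
  assert (E : t (Omega a ys) = t (Omega y ys))
    by (apply OmegaT_tgt_eq; auto; [apply Ha | apply Hy]; now left).
  change (tl (Delta y (a :: ys))) with (Delta a ys).
  replace (Delta a ys) with (Omega a ys :: tl (Delta y ys)) by now destruct ys.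
  cbn [rev]. rewrite act_app. cbn. unfold flip at 2, tstar.
  rewrite (proj2 (bullet_spec Hnd E)). now apply IH.
Qed.

Lemma coord_rev_DeltaList ys y : (forall z, In z (y :: ys) -> t z = mu) ->
  coord (flip rf) (rev (Delta y ys)) = rev (y :: ys).
Proof.
  revert y; induction ys as [|a ys IH]; intros y HJ; [reflexivity|].
  assert (Ha : forall z, In z (a :: ys) -> t z = mu) by (intros; apply HJ; now right).
  change (Delta y (a :: ys)) with (Omega y (a :: ys) :: Delta a ys).
  pose proof (act_rev_tl_DeltaList HJ) as Ey.
  cbn [rev]. rewrite coord_app, IH by exact Ha. cbn in Ey |- *.
  now rewrite Ey, <- app_assoc.
Qed.

End Delta.

Lemma peq_DeltaList_of_mirror_coord (Lam A : Type) (s t : A -> Lam) (lf rf : A -> A -> A)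
    p y1 ys :
  lcycle_quiver t s (flip rf) (flip lf) -> nondegenerate s t lf rf -> valid s t p ->
  coord (flip rf) (rev (parr p)) = rev (y1 :: ys) ->
  (forall y, In y (y1 :: ys) -> t y = ptgt t p) /\
  peq s t lf rf p (Path (s (OmegaT s t rf y1 ys)) (DeltaList s t rf y1 ys)).
Proof.
  intros Cm Hnd Vp E.
  assert (HJ : forall y, In y (y1 :: ys) -> t y = ptgt t p).
  { intros y Hy. apply (coord_src Cm (proj1 (chain_rev Vp))).
    rewrite E. now apply in_rev in Hy. }
  split; [exact HJ|].
  destruct (DeltaList_chain Hnd HJ) as [CD TD].
  apply (peq_of_mirror_coord_perm Cm Vp); [exact CD | exact (eq_sym TD) |]. cbn.
  now rewrite E, (coord_rev_DeltaList Hnd HJ).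
Qed.

Theorem proposition5p11 (Lam A : Type) (s t : A -> Lam) (lf rf : A -> A -> A)
  (HYB : qYB_map s t lf rf) (Hinv : involutive s t lf rf)
  (Hnd : nondegenerate s t lf rf) :
  forall p : path Lam A, valid s t p ->
    (inE s t lf rf p <->
      ((exists l, peq s t lf rf p (ident A l)) \/
       (exists (mu : Lam) (y1 : A) (ys : list A),
          NoDup (y1 :: ys) /\ (forall y, In y (y1 :: ys) -> t y = mu) /\
          peq s t lf rf p (Path (s (OmegaT s t rf y1 ys)) (DeltaList s t rf y1 ys))))).
Proof.
  pose proof (lcycle_quiver_of_qYB HYB Hinv Hnd) as C.
  pose proof (lcycle_quiver_of_qYB (qYB_map_mirror HYB) (involutive_mirror Hinv)
    (nondegenerate_mirror Hnd)) as Cm.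
  intros p Vp.
  rewrite (inE_iff_NoDup_coord C Vp), (NoDup_coord_iff_mirror C Cm Vp).
  split.
  - intros N. destruct (rev (coord (flip rf) (rev (parr p)))) as [|y1 ys] eqn:E.
    + left. exists (psrc p). split; [reflexivity|]. cbn.
      apply (f_equal (@length A)) in E.
      rewrite length_rev, length_coord, length_rev in E.
      apply length_zero_iff_nil in E as ->. apply rst_refl.
    + right. exists (ptgt t p), y1, ys.
      assert (Ecoord : coord (flip rf) (rev (parr p)) = rev (y1 :: ys))
        by now rewrite <- E, rev_involutive.
      split; [rewrite <- E; now apply NoDup_rev|].
      exact (peq_DeltaList_of_mirror_coord Cm Hnd Vp Ecoord).
  - intros [[l Hp] | (mu & y1 & ys & N & HJ & Hp)];
      apply (Permutation_NoDup (Permutation_sym (mirror_coord_perm_of_peq Cm Vp Hp))).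
    + constructor.
    + cbn. rewrite (coord_rev_DeltaList Hnd HJ). now apply NoDup_rev.
Qed.
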